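(* Let $Y\in\mathcal{P}^\infty(\Omega)$ and $\overline Y(\xi)=\frac1T\int_0^TY(s,\xi)\,ds$. Consider vector fields on $\mathbb{R}^{N+1}$ (coordinates $(t,\xi)$) given by $\widetilde Y^{(0)}_0=[1,0_{\mathbb{R}^N}]^T$, $\widetilde Y^{(0)}_1=[0,Y]^T$, $\widetilde Y^{(0)}_k=0$ for $k\ge2$, and a generator sequence $\widetilde G_0=[1,G_0]^T$, $\widetilde G_n=[0,G_n]^T$ ($n\ge1$), with $G_n$ smooth. Define $\widetilde Y^{(i)}_n$ for $i\ge1$ by the recursion $$\widetilde Y^{(i+1)}_n=\widetilde Y^{(i)}_{n+1}+\sum_{k=0}^nC_n^k\,L_{\widetilde G_{n-k}}\widetilde Y^{(i)}_k,\qquad (i,n)\in\mathbb{Z}_+^2,$$ and assume Lie's equations hold: $\widetilde Y^{(1)}_0=[0,\overline Y]^T$ and $\widetilde Y^{(m)}_0=0$ for all integers $m\ge2$. Define $M(j+k,j)=\widetilde Y^{(j)}_k$ for $k\ge0$, $j\ge1$ (and $M(i,j)=0$ for $i<j$). Then for every integer $j\ge2$ and every $l\in\{0,\dots,j-2\}$, $M(j,j-l)=0$, i.e. $\widetilde Y^{(j-l)}_l=0$.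
   Context: $\Omega\subset\mathbb{R}^N$ open, $T>0$; $\mathcal{P}^\infty(\Omega)$ denotes maps $\mathbb{R}^+\times\Omega\to\Omega$, $T$-periodic in $t$, smooth in $x$. $C_n^k$ is the binomial coefficient. For vector fields $H,A$ on $\mathbb{R}^{N+1}$, the Lie derivative is $L_HA=DA\cdot H-DH\cdot A$, $D$ the Jacobian in all $N+1$ variables $(t,\xi)$. *)

From HB Require Import structures.
From mathcomp Require Import all_boot all_order all_algebra.
From mathcomp Require Import all_classical all_reals all_analysis.
Set Implicit Arguments. Unset Strict Implicit. Unset Printing Implicit Defensive.
Import Order.TTheory GRing.Theory Num.Theory.
Import numFieldNormedType.Exports.
Local Open Scope classical_set_scope.
Local Open Scope ring_scope.

Section Defs.
Variable R : realType.
Variable N : nat.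

Definition tcoord (x : 'rV[R]_N.+1) : R := x 0 ord0.
Definition tail (x : 'rV[R]_N.+1) : 'rV[R]_N := \row_(i < N) x 0 (lift ord0 i).
(* [a, f]^T *)
Definition mkvec (a : R) (f : 'rV[R]_N) : 'rV[R]_N.+1 :=
  \row_(i < N.+1) (if unlift ord0 i is Some j then f 0 j else a).

Definition field := 'rV[R]_N.+1 -> 'rV[R]_N.+1.

Definition Lie (H A : field) : field :=
  fun x => 'D_(H x) A x - 'D_(A x) H x.

Fixpoint Ytil (Y0 : nat -> field) (Gt : nat -> field) (i : nat) : nat -> field :=
  match i with
  | 0 => Y0
  | i'.+1 => fun n x => Ytil Y0 Gt i' n.+1 x
        + \sum_(k < n.+1) ('C(n, k))%:R *: Lie (Gt (n - k)%N) (Ytil Y0 Gt i' k) x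
  end.

(* M(j+k, j) = tilde Y^{(j)}_k for j >= 1, M(i,j) = 0 for i < j (and, by convention, for j = 0) *)
Definition Mmat (Y0 : nat -> field) (Gt : nat -> field) (i j : nat) : field :=
  if (1 <= j)%N && (j <= i)%N then Ytil Y0 Gt j (i - j)%N else fun _ => 0.
End Defs.

Fixpoint Ck_on (R : realType) (m n : nat) (k : nat) (A : set 'rV[R]_m)
    (f : 'rV[R]_m -> 'rV[R]_n) : Prop :=
  match k with
  | 0 => {within A, continuous f}
  | k'.+1 => (forall x, A x -> differentiable f x) /\
             forall v : 'rV[R]_m, Ck_on k' A (fun x => 'D_v f x)
  end.
Definition smooth_on (R : realType) (m n : nat) (A : set 'rV[R]_m)
    (f : 'rV[R]_m -> 'rV[R]_n) : Prop := forall k, Ck_on k A f.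

Definition Yavg (R : realType) (N : nat) (T : R) (Y : R -> 'rV[R]_N -> 'rV[R]_N)
    (xi : 'rV[R]_N) : 'rV[R]_N :=
  \row_(i < N) (T^-1 * Rintegral lebesgue_measure `[0, T] (fun s => Y s xi 0 i)).

From HB Require Import structures.
From mathcomp Require Import all_boot all_order all_algebra.
From mathcomp Require Import all_classical all_reals all_analysis.
Import Order.TTheory GRing.Theory Num.Theory.
Import numFieldNormedType.Exports.
Local Open Scope classical_set_scope.
Local Open Scope ring_scope.

(* Only the shape of the recursion is used: the entry Y^(i)_(n+1) equals
   Y^(i+1)_n minus Lie derivatives of the entries Y^(i)_k, k <= n, so a band
   of rows i >= i0 vanishing in column 0 vanishes in every column, by strong
   induction on the column index. *)

Section YtilZero.
Variables (R : realType) (N : nat) (Y0 Gt : nat -> field R N).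

Lemma Lie0r (H : field R N) : Lie H (fun _ => 0) = (fun _ => 0).
Proof.
apply/funext => x; rewrite /Lie.
have -> : (fun _ : 'rV[R]_N.+1 => (0 : 'rV[R]_N.+1)) = cst 0 by [].
by rewrite derive_cst derive0 subr0.
Qed.

Lemma YtilS_shift i n :
  (forall k, (k <= n)%N -> Ytil Y0 Gt i k = (fun _ => 0)) ->
  Ytil Y0 Gt i.+1 n = Ytil Y0 Gt i n.+1.
Proof.
move=> col0; apply/funext => x; rewrite [LHS]/= big1 ?addr0 // => k _.
by rewrite col0 ?Lie0r ?scaler0 // -ltnS.
Qed.

Lemma Ytil_eq0_from_col0 i0 :
  (forall i, (i0 <= i)%N -> Ytil Y0 Gt i 0 = (fun _ => 0)) ->
  forall i n, (i0 <= i)%N -> Ytil Y0 Gt i n = (fun _ => 0).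
Proof.
move=> col0 i n; elim/ltn_ind: n i => -[|n] IH i le_i0i; first exact: col0.
rewrite -YtilS_shift; first exact/IH/leqW.
by move=> k le_kn; apply: IH.
Qed.

Lemma MmatE i j : (1 <= j <= i)%N -> Mmat Y0 Gt i j = Ytil Y0 Gt j (i - j).
Proof. by rewrite /Mmat => ->. Qed.

End YtilZero.

Theorem proposition2p5 (R : realType) (N : nat) (Omega : set 'rV[R]_N) (T : R)
  (Y : R -> 'rV[R]_N -> 'rV[R]_N) (G : nat -> 'rV[R]_N.+1 -> 'rV[R]_N) :
  open Omega -> 0 < T ->
  (* Y in P^infty(Omega) *)
  (forall t xi, 0 <= t -> Omega xi -> Omega (Y t xi)) ->
  (forall t xi, 0 <= t -> Omega xi -> Y (t + T) xi = Y t xi) ->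
  (forall t, 0 <= t -> smooth_on Omega (Y t)) ->
  (* G_n smooth *)
  (forall n, smooth_on setT (G n)) ->
  let Y0 : nat -> field R N := fun k =>
    match k with
    | 0 => fun _ => mkvec 1 0
    | 1 => fun x => mkvec 0 (Y (tcoord x) (tail x))
    | _ => fun _ => 0
    end in
  let Gt : nat -> field R N := fun n =>
    match n with
    | 0 => fun x => mkvec 1 (G 0 x)
    | _ => fun x => mkvec 0 (G n x)
    end in
  (* Lie's equations *)
  Ytil Y0 Gt 1 0 = (fun x => mkvec 0 (Yavg T Y (tail x))) ->
  (forall m, (2 <= m)%N -> Ytil Y0 Gt m 0 = (fun _ => 0)) ->
  forall j l, (2 <= j)%N -> (l <= j - 2)%N ->
    Mmat Y0 Gt j (j - l) = (fun _ => 0).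
Proof.
move=> _ _ _ _ _ _ Y0 Gt _ lie_eqs j l le2j le_l.
have le2jl : (2 <= j - l)%N by rewrite leq_subRL ?(leq_trans le_l) ?leq_subr // addnC -leq_subRL.
rewrite MmatE; last by rewrite (leq_trans _ le2jl) // leq_subr.
exact: Ytil_eq0_from_col0 lie_eqs _ _ le2jl.
Qed.
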